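(* Let $h>1$, $q=2^h$, and let $U$ be a nonempty proper subset of $\mathrm{GF}(q)^{\star}$. Let $\Omega$ be a regular hyperoval of $PG(2,q^2)$. Then there are at least two affine points $P(x,y)\in\Omega$ with $\|x\|\in U$.
   Context: $\|x\|=x^{q+1}$ for $x\in\mathrm{GF}(q^2)$. Points of $PG(2,q^2)$ are written in affine coordinates $P(x,y)$ when not on the line at infinity. For $q$ even, a regular hyperoval of $PG(2,q^2)$ is the union of a non-degenerate conic and its nucleus (the common point of all its tangent lines). *)

From HB Require Import structures.
From mathcomp Require Import all_boot all_order all_algebra all_field.
Set Implicit Arguments. Unset Strict Implicit. Unset Printing Implicit Defensive.
Import GRing.Theory.
Local Open Scope ring_scope.

(* Homogeneous coordinates (X, Y, Z) of PG(2, F) are triples ((X, Y), Z). *)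
Definition pscale (F : fieldType) (k : F) (v : F * F * F) : F * F * F :=
  (k * v.1.1, k * v.1.2, k * v.2).

Definition qform (F : fieldType) (a b c d e f : F) (v : F * F * F) : F :=
  let: (x, y, z) := v in
  a * x ^+ 2 + b * y ^+ 2 + c * z ^+ 2 + d * x * y + e * x * z + f * y * z.

(* Non-degeneracy of the conic Q = 0 in characteristic 2 (half-discriminant
   non-zero; equivalently Q does not vanish on the radical of its polar form). *)
Definition qform_nondeg (F : fieldType) (a b c d e f : F) : bool :=
  d * e * f + a * f ^+ 2 + b * e ^+ 2 + c * d ^+ 2 != 0.

(* Nucleus of the conic in characteristic 2: the radical of the polar form
   B(u,v) = Q(u+v)-Q(u)-Q(v), i.e. the point (f : e : d); all tangent lines
   pass through it. *)
Definition qnucleus (F : fieldType) (a b c d e f : F) : F * F * F := (f, e, d).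

Definition regular_hyperoval (F : finFieldType) (Om : pred (F * F * F)) : Prop :=
  exists a b c d e f : F,
    qform_nondeg a b c d e f /\
    forall v : F * F * F,
      Om v = (v != (0, 0, 0)) &&
             ((qform a b c d e f v == 0) ||
              [exists k : F, v == pscale k (qnucleus a b c d e f)]).

Definition subfield_units (F : finFieldType) (q : nat) : {set F} :=
  [set x : F | (x ^+ q == x) && (x != 0)].

From HB Require Import structures.
From mathcomp Require Import all_boot all_order all_algebra all_field.
From mathcomp Require Import ring zify.
Import GRing.Theory.
Local Open Scope ring_scope.
Set Implicit Arguments.
Unset Strict Implicit.
Unset Printing Implicit Defensive.

(* Write q = 2^h, N(x) = x^(q+1) and Tr for the absolute trace of GF(q^2).
   The bound already holds on each fibre N(x) = u with u in GF(q)^*, so a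
   single element of U suffices.  The points of the conic on the vertical line
   through x are the roots y of b y^2 + (d x + f) y + (a x^2 + e x + c); there
   are two of them exactly when Tr(b (a x^2 + e x + c) / (d x + f)^2) = 0
   (Artin-Schreier).  This trace is a constant plus Tr(beta x) if d = 0, and
   a constant plus Tr(beta / (d x + f)) otherwise, so it suffices to find x of
   norm u prescribing the trace of beta x, resp. of beta / (d x + f).  Both
   reduce to the existence, for rho in GF(q)^* and tau in GF(2), of v with
   N(v) = rho and Tr(v) = tau.  In the remaining cases (b = 0, d = f = 0, or
   N(f/d) = u) the vertical lines meet the hyperoval directly, through the
   nucleus when d x + f = 0. *)

Lemma leq_card_fibres (T T' : finType) (f : T -> T') (A : {set T})
    (B : {set T'}) k :
  {in A, forall x, f x \in B} ->
  {in B, forall y, #|[set x in A | f x == y]| <= k}%N ->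
  (#|A| <= #|B| * k)%N.
Proof.
move=> fAB fib; rewrite -sum1_card (partition_big f (mem B)) //=.
rewrite -sum_nat_const; apply: leq_sum => y yB; apply: leq_trans (fib y yB).
by rewrite -sum1_card; apply: eq_leq; apply: eq_bigl => x; rewrite inE.
Qed.

Lemma card_poly_fibre (F : finFieldType) (p : {poly F}) (y : F) :
  (1 < size p)%N -> (#|[set x | p.[x] == y]| < size p)%N.
Proof.
move=> p_gt1; set q := p - y%:P.
have size_q : size q = size p.
  by rewrite size_polyDl // size_polyN size_polyC (leq_ltn_trans (leq_b1 _)).
have q_neq0 : q != 0 by rewrite -size_poly_eq0 size_q -(subnKC p_gt1).
rewrite -size_q cardE; apply: max_poly_roots (enum_uniq _) => //.
by apply/allP=> x; rewrite mem_enum inE /root !hornerE subr_eq0.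
Qed.

Lemma sqrf_eq_id (R : idomainType) (x : R) :
  (x ^+ 2 == x) = (x == 0) || (x == 1).
Proof. by rewrite -subr_eq0 -{2}[x]mulr1 expr2 -mulrBr mulf_eq0 subr_eq0. Qed.

Section Trace2.
Variable F : fieldType.
Hypothesis charF : 2 \in [pchar F].

Lemma exprD2n n (x y : F) : (x + y) ^+ (2 ^ n) = x ^+ (2 ^ n) + y ^+ (2 ^ n).
Proof. by rewrite exprDn_pchar // pnatX pnatE // charF. Qed.

Lemma sqrrD2 (x y : F) : (x + y) ^+ 2 = x ^+ 2 + y ^+ 2.
Proof. exact: (exprD2n 1). Qed.

Lemma addr2_eq0 (x y : F) : (x + y == 0) = (x == y).
Proof. by rewrite addr_eq0 (oppr_pchar2 charF). Qed.

Lemma sqrf2_inj : injective (fun x : F => x ^+ 2).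
Proof.
move=> x y /= xy; apply/eqP; rewrite -addr2_eq0.
by rewrite -[_ == 0](expf_eq0 _ 2) sqrrD2 xy (addrr_pchar2 charF).
Qed.

(* When #|F| = 2^n, trace2 n is the absolute trace of F; on the subfield
   GF(2^k) of F, trace2 k is the absolute trace of that subfield. *)
Definition trace2 n (x : F) := \sum_(i < n) x ^+ (2 ^ i).

Lemma trace2D n x y : trace2 n (x + y) = trace2 n x + trace2 n y.
Proof.
by rewrite /trace2 -big_split; apply: eq_bigr => i _; rewrite exprD2n.
Qed.

Lemma trace20 n : trace2 n 0 = 0.
Proof. by rewrite /trace2 big1 // => i _; rewrite expr0n expn_eq0. Qed.

Lemma trace2_telescope n x : trace2 n (x ^+ 2) + trace2 n x = x ^+ (2 ^ n) + x.
Proof.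
elim: n => [|n IHn].
  by rewrite /trace2 !big_ord0 addr0 expr1 (addrr_pchar2 charF).
rewrite /trace2 !big_ord_recr /= -!/(trace2 n _) -exprM -expnS addrACA IHn.
by rewrite addrC -addrA [_ ^+ _ + (_ + x)]addrA (addrr_pchar2 charF) add0r.
Qed.

Lemma sqr_trace2 n x : trace2 n x ^+ 2 = trace2 n (x ^+ 2).
Proof.
rewrite /trace2; elim/big_rec2: _ => [|i a b _ <-]; first by rewrite expr0n.
by rewrite sqrrD2 -!exprM mulnC.
Qed.

Section FixedPoint.
Variables (n : nat) (x : F).
Hypothesis fix_x : x ^+ (2 ^ n) = x.

Lemma trace2_sqr : trace2 n (x ^+ 2) = trace2 n x.
Proof.
by apply/eqP; rewrite -addr2_eq0 trace2_telescope fix_x addr2_eq0.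
Qed.

Lemma sqr_trace2_id : trace2 n x ^+ 2 = trace2 n x.
Proof. by rewrite sqr_trace2 trace2_sqr. Qed.

End FixedPoint.

End Trace2.

Lemma card_trace2_eq0 (F : finFieldType) n :
  (#|[set x : F | trace2 n.+1 x == 0%R]| <= 2 ^ n)%N.
Proof.
pose p : {poly F} := \sum_(i < n.+1) 'X^(2 ^ i).
have size_p : size p = (2 ^ n).+1.
  rewrite /p big_ord_recr /= addrC size_polyDl size_polyXn //.
  rewrite (leq_ltn_trans (size_sum _ _ _)) // ltnS; apply/bigmax_leqP => i _.
  by rewrite size_polyXn ltn_exp2l.
have p_gt1 : (1 < size p)%N by rewrite size_p ltnS expn_gt0.
rewrite -ltnS -size_p (leq_trans _ (card_poly_fibre 0 p_gt1)) //.
rewrite ltnS subset_leq_card //; apply/subsetP => x; rewrite !inE.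
by rewrite /p horner_sum; under eq_bigr do rewrite hornerXn.
Qed.

Section Char2FiniteField.
Variables (F : finFieldType) (m : nat).
Hypothesis cardF : #|F| = (2 ^ m)%N.

Lemma card2_pchar : 2 \in [pchar F].
Proof. exact: (card_finPcharP cardF). Qed.

Let charF := card2_pchar.

Lemma card2_exp_gt0 : (0 < m)%N.
Proof. by have := card_finNzRing_gt1 F; rewrite cardF; case: m. Qed.

Lemma expf_card2 (x : F) : x ^+ (2 ^ m) = x.
Proof. by rewrite -cardF expf_card. Qed.

Lemma sqrf2_surj (x : F) : exists s, s ^+ 2 = x.
Proof.
exists (x ^+ (2 ^ m.-1)).
by rewrite -exprM -expnSr prednK ?card2_exp_gt0 ?expf_card2.
Qed.

Lemma artin_schreier (z : F) : trace2 m z = 0 -> exists s, s ^+ 2 + s = z.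
Proof.
move=> trz; pose AS := [set s ^+ 2 + s | s : F].
pose ker := [set x : F | trace2 m x == 0].
have AS_ker : AS \subset ker.
  apply/subsetP => _ /imsetP[s _ ->]; rewrite inE (trace2D charF).
  by rewrite (trace2_telescope charF) expf_card2 (addrr_pchar2 charF).
have card_ker : (#|ker| <= 2 ^ m.-1)%N.
  by rewrite /ker -(prednK card2_exp_gt0) card_trace2_eq0.
have card_AS : (#|[set: F]| <= #|AS| * 2)%N.
  apply: leq_card_fibres => [s _|y _]; first exact: imset_f.
  pose p : {poly F} := 'X^2 + 'X.
  have size_p : size p = 3%N by rewrite size_polyDl size_polyXn // size_polyX.
  have := @card_poly_fibre F p y; rewrite size_p => /(_ isT); rewrite ltnS.
  apply: leq_trans; apply/subset_leq_card/subsetP => x.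
  by rewrite !inE !hornerE.
have AS_eq : AS = ker.
  apply/eqP; rewrite eqEcard AS_ker (leq_trans card_ker) //.
  rewrite -(leq_pmul2r (isT : (0 < 2)%N)) -expnSr prednK ?card2_exp_gt0 //.
  by rewrite -cardF -cardsT.
have : z \in ker by rewrite inE trz.
by rewrite -AS_eq => /imsetP[s _ ->]; exists s.
Qed.

Lemma quadratic_two_roots (b L K : F) : b != 0 -> L != 0 ->
    trace2 m (b * K / L ^+ 2) = 0 ->
  exists y1 y2, [/\ y1 != y2, b * y1 ^+ 2 + L * y1 + K = 0
                            & b * y2 ^+ 2 + L * y2 + K = 0].
Proof.
move=> b0 L0 /artin_schreier[t tt].
have root_of s : s ^+ 2 + s = b * K / L ^+ 2 ->
    b * (L * s / b) ^+ 2 + L * (L * s / b) + K = 0.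
  move=> ss; rewrite -(addrr_pchar2 charF K); congr (_ + _).
  transitivity (L ^+ 2 / b * (s ^+ 2 + s)); first by field.
  by rewrite ss; field; rewrite L0.
exists (L * t / b), (L * (t + 1) / b); split; last 2 first.
- exact: root_of.
- apply: root_of; rewrite (sqrrD2 charF) expr1n addrACA.
  by rewrite (addrr_pchar2 charF) addr0.
apply: contraNneq (mulf_neq0 L0 (invr_neq0 b0)) => eq_y.
have -> : L / b = L * (t + 1) / b - L * t / b by field.
by rewrite eq_y subrr.
Qed.

End Char2FiniteField.

Section QuadraticExtension.
Variables (F : finFieldType) (h : nat).
Hypothesis cardF : #|F| = ((2 ^ h) ^ 2)%N.
Implicit Types x y u : F.

Let cardF2 : #|F| = (2 ^ (h + h))%N.
Proof. by rewrite cardF -expnM muln2 addnn. Qed.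

Let charF : 2 \in [pchar F] := card2_pchar cardF2.

Let h_gt0 : (0 < h)%N.
Proof. by have := card2_exp_gt0 cardF2; rewrite addn_gt0 orbb. Qed.

Local Notation trF := (trace2 (h + h)).
Local Notation trq := (trace2 h).

Definition conjq (x : F) := x ^+ (2 ^ h).
Definition normq (x : F) := x * conjq x.

Fact conjq_is_nmod_morphism : nmod_morphism conjq.
Proof.
by split=> [|x y]; rewrite /conjq ?expr0n ?expn_eq0 ?(exprD2n charF).
Qed.

Fact conjq_is_monoid_morphism : monoid_morphism conjq.
Proof. by split=> [|x y]; rewrite /conjq ?expr1n ?exprMn. Qed.

HB.instance Definition _ :=
  GRing.isNmodMorphism.Build F F conjq conjq_is_nmod_morphism.
HB.instance Definition _ :=
  GRing.isMonoidMorphism.Build F F conjq conjq_is_monoid_morphism.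

Lemma conjqK : involutive conjq.
Proof. by move=> x; rewrite /conjq -exprM -expnD -cardF2 expf_card. Qed.

Lemma conjq_normq x : conjq (normq x) = normq x.
Proof. by rewrite /normq rmorphM /= conjqK mulrC. Qed.

Lemma trF_conjq x : trF x = trq (x + conjq x).
Proof.
rewrite (trace2D charF) /trace2 big_split_ord; congr (_ + _).
by apply: eq_bigr => i _; rewrite /conjq -exprM -expnD.
Qed.

Lemma trF_fixed x : conjq x = x -> trF x = 0.
Proof. by move=> cx; rewrite trF_conjq cx (addrr_pchar2 charF) trace20. Qed.

Lemma sqr_trF x : trF x ^+ 2 = trF x.
Proof. by rewrite (sqr_trace2_id charF) // expf_card2. Qed.

Lemma trF_sqr x : trF (x ^+ 2) = trF x.
Proof. exact: (trace2_sqr charF (expf_card2 cardF2 x)). Qed.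

Lemma card_fixed_conjq : (2 ^ h <= #|[set z : F | conjq z == z]|)%N.
Proof.
have card_F : (#|[set: F]| <= #|[set z : F | conjq z == z]| * 2 ^ h)%N.
  apply: (leq_card_fibres (f := fun x => x + conjq x)) => [x _|y _].
    by rewrite inE rmorphD /= conjqK addrC.
  pose p : {poly F} := 'X^(2 ^ h) + 'X.
  have size_p : size p = (2 ^ h).+1.
    rewrite size_polyDl size_polyXn // size_polyX ltnS -(prednK h_gt0).
    by rewrite expnS leq_pmulr ?expn_gt0.
  have := @card_poly_fibre F p y; rewrite size_p ltnS => /(_ (expn_gt0 _ _)).
  rewrite ltnS.
  apply: leq_trans; apply/subset_leq_card/subsetP => x.
  by rewrite !inE !hornerE addrC.
by rewrite -(leq_pmul2r (expn_gt0 2 h)) mulnn -cardF -cardsT.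
Qed.

Lemma exists_trq_pair alpha : conjq alpha = alpha -> alpha != 0 ->
  exists t, [/\ conjq t = t, trq t = 1 & trq (alpha / t) = 1].
Proof.
move=> c_alpha alpha0.
(* Both T and alpha / T fill more than half of GF(q)^*. *)
pose S := [set z | conjq z == z]; pose T := [set t in S | trq t == 1].
pose T' := [set alpha / t | t in T].
have T_S : T \subset S by apply/subsetP => t; rewrite inE => /andP[].
have T'_S : T' \subset S.
  apply/subsetP => _ /imsetP[t /(subsetP T_S) + ->]; rewrite !inE => /eqP ct.
  by rewrite rmorphM fmorphV /= ct c_alpha.
have T0 : 0 \notin T by rewrite inE trace20 eq_sym oner_eq0 andbF.
have T'0 : 0 \notin T'.
  apply/imsetP => -[t tT /esym/eqP]; rewrite mulf_eq0 invr_eq0 (negbTE alpha0).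
  by move=> /eqP t0; rewrite -t0 tT in T0.
have card_T : (#|S| <= #|T| + 2 ^ h.-1)%N.
  rewrite -(cardsID T S) (setIidPr T_S) leq_add2l.
  rewrite (leq_trans _ (card_trace2_eq0 F h.-1)) // prednK //.
  apply/subset_leq_card/subsetP => t; rewrite !inE => /andP[+ /eqP ct].
  rewrite ct eqxx /= => /negbTE t1.
  by have := sqr_trace2_id charF ct; move/eqP; rewrite sqrf_eq_id t1 orbF.
have card_T' : #|T'| = #|T|.
  by apply: card_imset => s t /(mulfI alpha0)/invr_inj.
have card_S0 : #|S :\ 0| = #|S|.-1.
  by rewrite (cardsD1 0 S) inE rmorph0 eqxx.
have TT'_S0 : T :|: T' \subset S :\ 0.
  apply/subsetP => t /setUP[tT|tT']; rewrite in_setD1.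
  - by rewrite (subsetP T_S t tT) andbT; apply: contraNneq T0 => <-.
  - by rewrite (subsetP T'_S t tT') andbT; apply: contraNneq T'0 => <-.
have : (0 < #|T :&: T'|)%N.
  have := subset_leq_card TT'_S0; have := cardsUI T T'.
  have := card_fixed_conjq; rewrite -/S.
  have := expnSr 2 h.-1; rewrite prednK //.
  move: card_T card_T' card_S0; lia.
case/card_gt0P => s /setIP[sT /imsetP[t tT s_def]].
move: tT sT; rewrite s_def !inE => /andP[/eqP ct /eqP t1] /andP[_ /eqP t2].
by exists t.
Qed.

Lemma conjq_sqrt x s : conjq x = x -> s ^+ 2 = x -> conjq s = s.
Proof. by move=> cx s2; apply: (sqrf2_inj charF); rewrite /= -rmorphXn s2. Qed.

Lemma conjq_root_cases t rho v : conjq t = t -> conjq rho = rho ->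
  v ^+ 2 + t * v = rho -> conjq v = v \/ conjq v = v + t.
Proof.
move=> ct c_rho v_root.
have cv_root : conjq v ^+ 2 + t * conjq v = rho.
  by rewrite -rmorphXn -{1}ct -rmorphM -rmorphD /= v_root.
have : (conjq v + v) * (conjq v + v + t) = 0.
  transitivity ((conjq v + v) ^+ 2 + t * (conjq v + v)); first by ring.
  rewrite (sqrrD2 charF) -[RHS](addrr_pchar2 charF rho) -{1}cv_root -v_root.
  by ring.
move/eqP; rewrite mulf_eq0 !(addr2_eq0 charF) => /orP[/eqP|/eqP cv].
  by left.
by right; rewrite -cv addrCA (addrr_pchar2 charF) addr0.
Qed.

(* v is a root of X^2 + t X + rho, which is irreducible over GF(q) by the
   choice of t, so that v + conjq v = t. *)
Lemma exists_norm_trace1 rho : conjq rho = rho -> rho != 0 ->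
  exists v, normq v = rho /\ trF v = 1.
Proof.
move=> c_rho rho0; have [alpha alpha2] := sqrf2_surj cardF2 rho.
have c_alpha := conjq_sqrt c_rho alpha2.
have alpha0 : alpha != 0.
  by apply: contraNneq rho0 => a0; rewrite -alpha2 a0 expr0n.
have [t [ct t1 t2]] := exists_trq_pair c_alpha alpha0.
have t0 : t != 0.
  by apply: contra_eq_neq t1 => ->; rewrite trace20 eq_sym oner_neq0.
pose z := rho / t ^+ 2.
have cz : conjq z = z by rewrite rmorphM fmorphV rmorphXn /= ct c_rho.
have [s s_z] := artin_schreier cardF2 (trF_fixed cz).
have v_root : (t * s) ^+ 2 + t * (t * s) = rho.
  have -> : (t * s) ^+ 2 + t * (t * s) = t ^+ 2 * (s ^+ 2 + s) by ring.
  by rewrite s_z mulrC divfK // expf_neq0.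
have [cv|cv] := conjq_root_cases ct c_rho v_root; last first.
  exists (t * s); rewrite /normq cv mulrDr -expr2 [_ * t]mulrC v_root.
  by rewrite trF_conjq cv addrA (addrr_pchar2 charF) add0r.
have cs : conjq s = s by move: cv; rewrite rmorphM /= ct => /(mulfI t0).
have c_alpha_t : conjq (alpha / t) = alpha / t.
  by rewrite rmorphM fmorphV /= ct c_alpha.
have : trq (s ^+ 2 + s) = 0.
  by rewrite (trace2D charF) (trace2_telescope charF) -/(conjq s) cs
    (addrr_pchar2 charF).
rewrite s_z /z -alpha2 -expr_div_n (trace2_sqr charF c_alpha_t) t2.
by move/eqP; rewrite oner_eq0.
Qed.

Lemma exists_norm_trace rho tau :
    conjq rho = rho -> rho != 0 -> tau ^+ 2 = tau ->
  exists v, normq v = rho /\ trF v = tau.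
Proof.
move=> c_rho rho0 /eqP; rewrite sqrf_eq_id => /orP[/eqP->|/eqP->].
  have [s s2] := sqrf2_surj cardF2 rho; have cs := conjq_sqrt c_rho s2.
  by exists s; rewrite /normq cs -expr2 s2 trF_fixed.
exact: exists_norm_trace1.
Qed.

Lemma normqM x y : normq (x * y) = normq x * normq y.
Proof. by rewrite /normq rmorphM mulrACA. Qed.

Lemma normqV x : normq x^-1 = (normq x)^-1.
Proof. by rewrite /normq fmorphV invfM. Qed.

Lemma normq_eq0 x : (normq x == 0) = (x == 0).
Proof. by rewrite /normq mulf_eq0 fmorph_eq0 orbb. Qed.

Lemma exists_norm_trace_linear beta u tau :
    beta != 0 -> conjq u = u -> u != 0 -> tau ^+ 2 = tau ->
  exists x, normq x = u /\ trF (beta * x) = tau.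
Proof.
move=> beta0 cu u0 tau2.
have c_rho : conjq (normq beta * u) = normq beta * u.
  by rewrite rmorphM /= conjq_normq cu.
have rho0 : normq beta * u != 0 by rewrite mulf_neq0 ?normq_eq0.
have [v [nv trv]] := exists_norm_trace c_rho rho0 tau2.
exists (beta^-1 * v); rewrite mulVKf // normqM normqV nv mulKf //.
by rewrite normq_eq0.
Qed.

(* Completing the norm: the norm of beta - f w, compared with that of w, only
   depends on the norm of the shifted variable v. *)
Lemma normq_shift beta f k v : conjq k = k -> k != 0 -> v != 0 ->
    normq v = normq beta * (normq f - k) / k ^+ 2 ->
  normq (beta - f * (v + beta * conjq f / k)) =
    (normq f - k) * normq (v + beta * conjq f / k).
Proof.
move=> ck k0 v0 nv; have cv : conjq v = normq v / v.
  by rewrite /normq [v * _]mulrC mulfK.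
rewrite /normq rmorphB rmorphM /= rmorphD !rmorphM fmorphV /= conjqK ck cv.
by rewrite nv /normq; field; rewrite k0 v0.
Qed.

Lemma exists_norm_trace_mobius beta d f u tau :
    beta != 0 -> d != 0 -> conjq u = u -> u != 0 -> normq (f / d) != u ->
    tau ^+ 2 = tau ->
  exists x, [/\ normq x = u, d * x + f != 0 & trF (beta / (d * x + f)) = tau].
Proof.
move=> beta0 d0 cu u0 nfd tau2; pose k := normq f - normq d * u.
have ck : conjq k = k.
  by rewrite /k rmorphB /= conjq_normq rmorphM /= conjq_normq cu.
have k0 : k != 0.
  apply: contraNneq nfd => /eqP; rewrite subr_eq0 normqM normqV => /eqP->.
  by rewrite mulrC mulKf ?normq_eq0.
have r_def : normq d * u = normq f - k by rewrite /k opprB addrC subrK.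
pose rho := normq beta * (normq f - k) / k ^+ 2.
have c_rho : conjq rho = rho.
  rewrite /rho -r_def rmorphM fmorphV rmorphXn /= ck rmorphM /= conjq_normq.
  by rewrite rmorphM /= conjq_normq cu.
have rho0 : rho != 0.
  by rewrite /rho -r_def !mulf_neq0 ?invr_eq0 ?expf_neq0 ?normq_eq0.
pose delta := beta * conjq f / k.
have tau'2 : (tau + trF delta) ^+ 2 = tau + trF delta.
  by rewrite (sqrrD2 charF) tau2 sqr_trF.
have [v [nv trv]] := exists_norm_trace c_rho rho0 tau'2.
have v0 : v != 0 by apply: contraNneq rho0 => v0; rewrite -nv normq_eq0 v0.
pose w := v + delta.
have norm_w : normq (beta - f * w) = normq d * u * normq w.
  by rewrite r_def; apply: normq_shift.
have w0 : w != 0.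
  apply: contraNneq beta0 => w0; move: norm_w.
  have -> : normq w = 0 by apply/eqP; rewrite normq_eq0 w0.
  by rewrite w0 !mulr0 subr0 => /eqP; rewrite normq_eq0.
have Lx : d * ((beta - f * w) / (d * w)) + f = beta / w.
  by field; rewrite w0 d0.
exists ((beta - f * w) / (d * w)); split.
- rewrite normqM normqV normqM norm_w; field.
  by rewrite !normq_eq0 w0 d0.
- by rewrite Lx mulf_neq0 ?invr_eq0.
- rewrite Lx (_ : beta / (beta / w) = w); last by field; rewrite w0 beta0.
  by rewrite (trace2D charF) trv -addrA (addrr_pchar2 charF) addr0.
Qed.

Section Hyperoval.
Variables (a b c d e f : F) (Om : pred (F * F * F)).
Hypothesis nondeg : qform_nondeg a b c d e f.
Hypothesis Om_def : forall v, Om v = (v != (0, 0, 0)) &&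
  ((qform a b c d e f v == 0) ||
   [exists k, v == pscale k (qnucleus a b c d e f)]).

Definition hyperoval_fibre u :=
  [set p : F * F | Om (p.1, p.2, 1) && (normq p.1 == u)].

Lemma qform_affineE x y : qform a b c d e f (x, y, 1) =
  b * y ^+ 2 + (d * x + f) * y + (a * x ^+ 2 + e * x + c).
Proof. by rewrite /qform; ring. Qed.

Let affine_neq0 x y : (x, y, 1) != (0, 0, 0) :> F * F * F.
Proof. by apply/negP => /eqP[_ _ /eqP]; rewrite oner_eq0. Qed.

Lemma hyperoval_conic x y : qform a b c d e f (x, y, 1) = 0 -> Om (x, y, 1).
Proof. by move=> Q0; rewrite Om_def affine_neq0 Q0 eqxx. Qed.

Lemma hyperoval_nucleus : d != 0 -> Om (f / d, e / d, 1).
Proof.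
move=> d0; rewrite Om_def affine_neq0 /=; apply/orP; right; apply/existsP.
by exists d^-1; rewrite /pscale /= mulVf // ![d^-1 * _]mulrC.
Qed.

Lemma card_fibre_gt1_cover u : (forall x, exists y, Om (x, y, 1)) ->
  conjq u = u -> u != 0 -> (1 < #|hyperoval_fibre u|)%N.
Proof.
move=> cover cu u0.
have sqr0 : (0 : F) ^+ 2 = 0 by rewrite expr0n.
have [x0 [n0 tr0]] := exists_norm_trace_linear (oner_neq0 F) cu u0 sqr0.
have [x1 [n1 tr1]] := exists_norm_trace_linear (oner_neq0 F) cu u0 (expr1n F 2).
have [y0 Om0] := cover x0; have [y1 Om1] := cover x1.
apply/card_gt1P; exists (x0, y0), (x1, y1); rewrite !inE Om0 Om1 n0 n1 eqxx.
split=> //; apply: contraTneq isT => -[x01 _].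
by move: tr1; rewrite -x01 tr0 => /eqP; rewrite eq_sym oner_eq0.
Qed.

Lemma card_fibre_gt1_ordinates x y1 y2 : y1 != y2 ->
  Om (x, y1, 1) -> Om (x, y2, 1) -> (1 < #|hyperoval_fibre (normq x)|)%N.
Proof.
move=> y12 Om1 Om2; apply/card_gt1P; exists (x, y1), (x, y2).
by rewrite !inE Om1 Om2 eqxx; split=> //; apply: contra_neq y12 => -[].
Qed.

Lemma hyperoval_cover_b0 : b = 0 -> forall x, exists y, Om (x, y, 1).
Proof.
move=> b0 x; have [L0|L0] := eqVneq (d * x + f) 0; last first.
  exists ((a * x ^+ 2 + e * x + c) / (d * x + f)); apply: hyperoval_conic.
  by rewrite qform_affineE b0 mul0r add0r mulrC divfK // (addrr_pchar2 charF).
have d0 : d != 0.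
  apply: contraNneq nondeg => d0; move: L0; rewrite d0 mul0r add0r => f0.
  by rewrite b0 f0 !(mulr0, mul0r, expr0n) !addr0.
have -> : x = f / d.
  by move/eqP: L0; rewrite (addr2_eq0 charF) => /eqP <-; rewrite mulrC mulKf.
by exists (e / d); apply: hyperoval_nucleus.
Qed.

Lemma hyperoval_cover_df0 :
  b != 0 -> d = 0 -> f = 0 -> forall x, exists y, Om (x, y, 1).
Proof.
move=> b0 d0 f0 x.
have [y y2] := sqrf2_surj cardF2 ((a * x ^+ 2 + e * x + c) / b).
exists y; apply: hyperoval_conic.
rewrite qform_affineE d0 f0 mul0r add0r mul0r addr0.
by rewrite y2 mulrC divfK // (addrr_pchar2 charF).
Qed.

Lemma card_fibre_gt1_trace x : b != 0 -> d * x + f != 0 ->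
    trF (b * (a * x ^+ 2 + e * x + c) / (d * x + f) ^+ 2) = 0 ->
  (1 < #|hyperoval_fibre (normq x)|)%N.
Proof.
move=> b0 L0 /(quadratic_two_roots cardF2 b0 L0)[y1 [y2 [y12 root1 root2]]].
by apply: (card_fibre_gt1_ordinates y12); apply: hyperoval_conic;
  rewrite qform_affineE.
Qed.

Lemma card_fibre_gt1_nucleus : b != 0 -> d != 0 ->
  (1 < #|hyperoval_fibre (normq (f / d))|)%N.
Proof.
move=> b0 d0; have L0 : d * (f / d) + f = 0.
  by rewrite mulrC divfK // (addrr_pchar2 charF).
have [y y2] := sqrf2_surj cardF2 ((a * (f / d) ^+ 2 + e * (f / d) + c) / b).
have Q0 : qform a b c d e f (f / d, y, 1) = 0.
  rewrite qform_affineE L0 mul0r addr0 y2 mulrC divfK //.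
  exact: (addrr_pchar2 charF).
apply: (card_fibre_gt1_ordinates (y2 := e / d) _ (hyperoval_conic Q0)
  (hyperoval_nucleus d0)).
apply: contraNneq nondeg => ye; move/eqP: Q0.
rewrite ye qform_affineE L0 mul0r addr0.
rewrite (_ : _ + _ =
  (d * e * f + a * f ^+ 2 + b * e ^+ 2 + c * d ^+ 2) / d ^+ 2).
  by rewrite mulf_eq0 invr_eq0 expf_eq0 (negbTE d0) orbF.
by field.
Qed.

Let conic_slope_neq0 beta den : b != 0 -> den != 0 ->
  beta ^+ 2 = b * (d * e * f + a * f ^+ 2 + b * e ^+ 2 + c * d ^+ 2) / den ->
  beta != 0.
Proof.
move=> b0 den0 beta2; apply: contraNneq nondeg => beta0.
move/eqP: beta2; rewrite beta0 expr0n eq_sym !mulf_eq0 invr_eq0 (negbTE b0).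
by rewrite (negbTE den0) orbF.
Qed.

Lemma trF_conic_linear : b != 0 -> d = 0 -> f != 0 ->
  exists2 beta, beta != 0 & forall x,
    trF (b * (a * x ^+ 2 + e * x + c) / (d * x + f) ^+ 2) =
    trF (b * c / f ^+ 2) + trF (beta * x).
Proof.
move=> b0 d0 f0; have [g g2] := sqrf2_surj cardF2 (a * b / f ^+ 2).
exists (b * e / f ^+ 2 + g) => [|x].
  apply: (conic_slope_neq0 b0 (expf_neq0 4 f0)).
  by rewrite (sqrrD2 charF) g2 d0; field.
rewrite d0 mul0r add0r.
have -> : b * (a * x ^+ 2 + e * x + c) / f ^+ 2 =
    b * c / f ^+ 2 + (b * e / f ^+ 2 * x + (g * x) ^+ 2).
  by rewrite exprMn g2; field.
by rewrite !(trace2D charF) trF_sqr mulrDl (trace2D charF).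
Qed.

Lemma trF_conic_mobius : b != 0 -> d != 0 ->
  exists2 beta, beta != 0 & forall x, d * x + f != 0 ->
    trF (b * (a * x ^+ 2 + e * x + c) / (d * x + f) ^+ 2) =
    trF (a * b / d ^+ 2) + trF (beta / (d * x + f)).
Proof.
move=> b0 d0; pose C := a * f ^+ 2 / d ^+ 2 + e * f / d + c.
(* Expand in powers of 1 / (d x + f); the *+ 2 term vanishes in
   characteristic 2. *)
have [g g2] := sqrf2_surj cardF2 (b * C).
exists (b * e / d + g) => [|x L0].
  apply: (conic_slope_neq0 b0 (expf_neq0 2 d0)).
  by rewrite (sqrrD2 charF) g2 /C; field.
have -> : b * (a * x ^+ 2 + e * x + c) / (d * x + f) ^+ 2 =
    a * b / d ^+ 2 + (b * e / d / (d * x + f) + (g / (d * x + f)) ^+ 2)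
    - (a * b * f / (d ^+ 2 * (d * x + f))
       + b * e * f / (d * (d * x + f) ^+ 2)) *+ 2.
  by rewrite expr_div_n g2 /C -mulr_natr; field; rewrite L0 d0.
rewrite (mulrn_pchar charF) subr0 !(trace2D charF) trF_sqr -(trace2D charF).
by rewrite -mulrDl.
Qed.

Lemma card_hyperoval_fibre_gt1 u :
  conjq u = u -> u != 0 -> (1 < #|hyperoval_fibre u|)%N.
Proof.
move=> cu u0; have [b0|b0] := eqVneq b 0.
  exact: card_fibre_gt1_cover (hyperoval_cover_b0 b0) cu u0.
have [d0|d0] := eqVneq d 0.
  have [f0|f0] := eqVneq f 0.
    exact: card_fibre_gt1_cover (hyperoval_cover_df0 b0 d0 f0) cu u0.
  have [beta beta0 trP] := trF_conic_linear b0 d0 f0.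
  have [x [<- trx]] :=
    exists_norm_trace_linear beta0 cu u0 (sqr_trF (b * c / f ^+ 2)).
  apply: (card_fibre_gt1_trace b0); first by rewrite d0 mul0r add0r.
  by rewrite trP trx (addrr_pchar2 charF).
have [<-|nfd] := eqVneq (normq (f / d)) u; first exact: card_fibre_gt1_nucleus.
have [beta beta0 trP] := trF_conic_mobius b0 d0.
have [x [<- L0 trx]] :=
  exists_norm_trace_mobius beta0 d0 cu u0 nfd (sqr_trF (a * b / d ^+ 2)).
by apply: (card_fibre_gt1_trace b0 L0); rewrite trP // trx (addrr_pchar2 charF).
Qed.

End Hyperoval.
End QuadraticExtension.

Theorem lemma3p2 (h : nat) (F : finFieldType) (U : {set F})
    (Om : pred (F * F * F)) :
  (1 < h)%N ->
  #|F| = ((2 ^ h) ^ 2)%N ->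
  U != set0 ->
  U \proper subfield_units F (2 ^ h) ->
  regular_hyperoval Om ->
  (2 <= #|[set p : F * F | Om (p.1, p.2, 1%R) && (p.1 ^+ (2 ^ h).+1 \in U)]|)%N.
Proof.
move=> _ cardF /set0Pn[u uU] /properP[U_sub _].
move=> [a [b [c [d [e [f [nondeg Om_def]]]]]]].
have /setIdP[/eqP cu u0] := subsetP U_sub u uU.
apply: leq_trans (card_hyperoval_fibre_gt1 cardF nondeg Om_def cu u0) _.
apply/subset_leq_card/subsetP => p; rewrite !inE => /andP[-> /eqP nu].
by rewrite exprS -[_ * _]/(normq h p.1) nu.
Qed.
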